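(* Let $n\ge1$, $\boldsymbol z\in\{0,1\}^n$, and $\boldsymbol y,\boldsymbol y'\in\overline{\mathbb R}^n$ with $y_i\le y_i'$ if $z_i=1$ and $y_i\ge y_i'$ if $z_i=0$. Let $a,b>0$, $\gamma=\min(\{y_i:y_i\in\mathbb R\}\cup\{y_i':y_i'\in\mathbb R\})-a$ and $\zeta=\max(\{y_i:y_i\in\mathbb R\}\cup\{y_i':y_i'\in\mathbb R\})+b$, and define $\tilde{\boldsymbol y},\tilde{\boldsymbol y}'\in\mathbb R^n$ by replacing each coordinate equal to $-\infty$ by $\gamma$ and each coordinate equal to $+\infty$ by $\zeta$ (real coordinates unchanged). Then, for the rank-sum statistic $t_{\mathrm R,\phi}$: (a) $\tilde y_i\le\tilde y_i'$ if $z_i=1$ and $\tilde y_i\ge\tilde y_i'$ if $z_i=0$; (b) $t_{\mathrm R,\phi}(\boldsymbol z,\boldsymbol y)=t_{\mathrm R,\phi}(\boldsymbol z,\tilde{\boldsymbol y})$ and $t_{\mathrm R,\phi}(\boldsymbol z,\boldsymbol y')=t_{\mathrm R,\phi}(\boldsymbol z,\tilde{\boldsymbol y}')$; (c) $t_{\mathrm R,\phi}(\boldsymbol z,\boldsymbol y)\le t_{\mathrm R,\phi}(\boldsymbol z,\boldsymbol y')$.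
   Context: $\overline{\mathbb R}=\mathbb R\cup\{\pm\infty\}$. For $1\le i,j\le n$ and $y,y'\in\overline{\mathbb R}$, $\psi_{i,j}(y,y')=\mathbf 1\{y>y'\}+\mathbf 1\{y=y'\}\mathbf 1\{i\ge j\}$; $\mathrm{rank}_i(\boldsymbol y)=\sum_{j=1}^n\psi_{i,j}(y_i,y_j)$. $\phi$ is a fixed nondecreasing real function on the nonnegative integers. Rank-sum statistic: $t_{\mathrm R,\phi}(\boldsymbol z,\boldsymbol y)=\sum_{i=1}^nz_i\phi(\mathrm{rank}_i(\boldsymbol y))$. *)

From HB Require Import structures.
From mathcomp Require Import all_boot all_order all_algebra.
From mathcomp Require Import reals constructive_ereal.
Set Implicit Arguments. Unset Strict Implicit. Unset Printing Implicit Defensive.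
Import Order.TTheory GRing.Theory Num.Theory.
Local Open Scope ring_scope.
Local Open Scope ereal_scope.

Section Defs.
Variable R : realType.

Definition psi (n : nat) (i j : 'I_n) (y y' : \bar R) : nat :=
  addn (nat_of_bool (y' < y)) (nat_of_bool ((y == y') && (j <= i)%N)).

Definition rank (n : nat) (y : 'I_n -> \bar R) (i : 'I_n) : nat :=
  (\sum_(j < n) psi i j (y i) (y j))%N.

Definition tR (phi : nat -> R) (n : nat) (z : 'I_n -> bool) (y : 'I_n -> \bar R) : R :=
  (\sum_(i < n) (z i)%:R * phi (rank y i))%R.

Definition real_coords (n : nat) (y y' : 'I_n -> \bar R) : seq R :=
  [seq fine (y i) | i <- enum 'I_n & y i \is a fin_num] ++
  [seq fine (y' i) | i <- enum 'I_n & y' i \is a fin_num].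

(* min / max of a list of reals; convention 0 for the empty list *)
Definition seq_min (s : seq R) : R :=
  if s is x :: s' then (\big[Num.min/x]_(v <- s') v)%R else 0%R.
Definition seq_max (s : seq R) : R :=
  if s is x :: s' then (\big[Num.max/x]_(v <- s') v)%R else 0%R.

Definition gamma (n : nat) (y y' : 'I_n -> \bar R) (a : R) : R :=
  (seq_min (real_coords y y') - a)%R.
Definition zeta (n : nat) (y y' : 'I_n -> \bar R) (b : R) : R :=
  (seq_max (real_coords y y') + b)%R.

Definition fill (g h : R) (x : \bar R) : R :=
  match x with EFin r => r | +oo => h | -oo => g end.

End Defs.

From HB Require Import structures.
From mathcomp Require Import all_boot all_order all_algebra.
From mathcomp Require Import reals constructive_ereal.
From mathcomp Require Import zify lra.
Import Order.TTheory GRing.Theory Num.Theory.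
Local Open Scope ring_scope.

Set Implicit Arguments. Unset Strict Implicit.

(* rank_i(y) counts the j whose key (y_j, j) is lexicographically at most
   (y_i, i); these keys are distinct, so the ranks are a permutation of
   1..n and depend on y only through its order.  The replacement of
   -oo/+oo by gamma/zeta is strictly increasing on all the coordinates,
   which gives (a) and (b).  For (c), telescoping phi gives
     t(z, y) = phi(0) #{i | z_i}
               + sum_k (phi(k+1) - phi(k)) #{i | z_i, rank_i(y) > k},
   and each count grows from y to y': exactly n - k units have rank > k, so
   if a treated unit t dropped out of the top n - k, a control unit c
   entered it; c ranked below t under y and above t under y', which is
   impossible once treated units only move up and controls only move down. *)

Section KeyRank.
Context {disp : Order.disp_t} {T : orderType disp} {n : nat}.
Variable key : 'I_n -> T.
Local Open Scope order_scope.

Definition key_rank (i : 'I_n) : nat := #|[set j | key j <= key i]|.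

Lemma key_rank_gt0 i : (0 < key_rank i)%N.
Proof. by apply/card_gt0P; exists i; rewrite inE. Qed.

Lemma key_rank_leq i : (key_rank i <= n)%N.
Proof. by rewrite -[n in (_ <= n)%N]card_ord max_card. Qed.

Lemma leq_key_rank i j : key i <= key j -> (key_rank i <= key_rank j)%N.
Proof.
move=> le_ij; apply/subset_leq_card/subsetP => k; rewrite !inE => le_ki.
exact: le_trans le_ki le_ij.
Qed.

Lemma ltn_key_rank i j : (key_rank i < key_rank j)%N = (key i < key j).
Proof.
apply/idP/idP => [|lt_ij].
  by apply: contraTT; rewrite -leNgt -leqNgt; apply: leq_key_rank.
apply/proper_card/properP; split.
  by apply/subsetP => k; rewrite !inE => le_ki; rewrite (le_trans le_ki) ?ltW.
by exists j; rewrite !inE // leNgt lt_ij.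
Qed.

Hypothesis key_inj : injective key.

Lemma key_rank_inj : injective key_rank.
Proof.
move=> i j eq_ij; apply: key_inj.
by case: (ltgtP (key i) (key j)) => [||//]; rewrite -ltn_key_rank eq_ij ltnn.
Qed.

Lemma card_key_rank_gt k :
  #|[set i | (k < key_rank i)%N]| = #|[set r : 'I_n | (k < r.+1)%N]|.
Proof.
have rank_lt i : ((key_rank i).-1 < n)%N.
  by rewrite prednK ?key_rank_gt0 ?key_rank_leq.
pose rank_ord i := Ordinal (rank_lt i).
have rank_ord_inj : injective rank_ord.
  move=> i j /(congr1 val) /= eq_ij; apply: key_rank_inj.
  by rewrite -[key_rank i]prednK ?key_rank_gt0 // eq_ij prednK ?key_rank_gt0.
rewrite -[RHS](on_card_preimset (onW_bij _ (injF_bij rank_ord_inj))).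
by apply: eq_card => i; rewrite !inE /= prednK ?key_rank_gt0.
Qed.

End KeyRank.

Lemma card_setID_exchange (T : finType) (A U V : {set T}) :
  #|U| = #|V| -> (#|V :&: A| < #|U :&: A|)%N ->
  exists t c, t \in (U :&: A) :\: V /\ c \in (V :\: A) :\: U.
Proof.
move=> eq_UV lt_VU.
have /subsetPn[t tUA tV] : ~~ (U :&: A \subset V).
  apply: contraTN lt_VU => sub_UV; rewrite -leqNgt subset_leq_card //.
  by rewrite subsetI sub_UV subsetIr.
have /subsetPn[c cVA cU] : ~~ (V :\: A \subset U).
  apply/negP => sub_VU.
  have : V :\: A \subset U :\: A.
    apply/subsetP => x xVA; have /setDP[_ xA] := xVA.
    by rewrite !inE xA (subsetP sub_VU).
  move/subset_leq_card; have := cardsID A U; have := cardsID A V; lia.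
by exists t, c; split; apply/setDP.
Qed.

Section RankSum.
Variables (R : realType) (n : nat).
Implicit Types (y : 'I_n -> \bar R) (z : 'I_n -> bool) (phi : nat -> R).
Local Open Scope order_scope.

Definition rank_key y (j : 'I_n) : \bar R *l nat := (y j, val j).

Lemma rank_key_inj y : injective (rank_key y).
Proof. by move=> i j [_ /val_inj]. Qed.

Lemma rankE y i : rank y i = key_rank (rank_key y) i.
Proof.
rewrite /rank /key_rank -sum1_card [RHS]big_mkcond /=; apply: eq_bigr => j _.
rewrite inE lexi_pair /psi /=; case: ltgtP => //=; by rewrite ?eqxx.
Qed.

Lemma rank_leq y i : (rank y i <= n)%N.
Proof. by rewrite rankE key_rank_leq. Qed.

Lemma ltn_rank y i j :
  (rank y i < rank y j)%N = (rank_key y i < rank_key y j).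
Proof. by rewrite !rankE ltn_key_rank. Qed.

Lemma card_rank_gt y k :
  #|[set i | (k < rank y i)%N]| = #|[set r : 'I_n | (k < r.+1)%N]|.
Proof.
rewrite -(card_key_rank_gt (@rank_key_inj y)).
by apply: eq_card => i; rewrite !inE rankE.
Qed.

Lemma rank_key_swap y y' t c : y t <= y' t -> y' c <= y c ->
  rank_key y c < rank_key y t -> rank_key y' c < rank_key y' t.
Proof.
rewrite !ltxi_pair /= => le_t le_c /andP[le_ct tie].
rewrite (le_trans le_c (le_trans le_ct le_t)) /=; apply/implyP => le_tc'.
exact: (implyP tie) (le_trans le_t (le_trans le_tc' le_c)).
Qed.

Lemma card_treated_rank_gt z y y'
    (shift : forall i, if z i then y i <= y' i else y' i <= y i) k :
  (#|[set i | z i & (k < rank y i)%N]|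
     <= #|[set i | z i & (k < rank y' i)%N]|)%N.
Proof.
have setIE (w : 'I_n -> \bar R) :
    [set i | z i & (k < rank w i)%N]
    = [set i | (k < rank w i)%N] :&: [set i | z i].
  by apply/setP => i; rewrite !inE andbC.
have eq_card_gt := etrans (card_rank_gt y k) (esym (card_rank_gt y' k)).
rewrite !setIE leqNgt; apply/negP.
move=> /(card_setID_exchange eq_card_gt)[t [c []]].
rewrite !inE => /andP[ty' /andP[ty zt]] /andP[cy /andP[zc cy']].
have := shift t; have := shift c; rewrite zt (negbTE zc) => le_c le_t.
have : (rank_key y c < rank_key y t) by rewrite -ltn_rank; lia.
by move/(rank_key_swap le_t le_c); rewrite -ltn_rank; lia.
Qed.

Lemma telescope_indicator phi r : (r <= n)%N ->
  phi r = phi 0%N + \sum_(k < n) (phi k.+1 - phi k) * (k < r)%N%:R.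
Proof.
move=> le_rn; under eq_bigr do rewrite mulr_natr mulrb.
rewrite -big_mkcond /= -(big_ord_widen n (fun k => phi k.+1 - phi k) le_rn).
rewrite -(big_mkord xpredT (fun k => phi k.+1 - phi k)) telescope_sumr //.
by rewrite addrC subrK.
Qed.

Lemma sum_nat_indicator (P : pred 'I_n) :
  \sum_i (P i)%:R = #|[set i | P i]|%:R :> R.
Proof.
rewrite cardsE -sumr_const [RHS]big_mkcond /=.
by apply: eq_bigr => i _; rewrite unfold_in; case: (P i).
Qed.

Lemma tR_decomp phi z y :
  tR phi z y = \sum_i (z i)%:R * phi 0%N +
    \sum_(k < n) (phi k.+1 - phi k) * #|[set i | z i & (k < rank y i)%N]|%:R.
Proof.
rewrite /tR; under eq_bigr do rewrite (telescope_indicator phi (rank_leq y _)).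
rewrite (eq_bigr _ (fun i _ => mulrDr _ _ _)) big_split /=; congr (_ + _).
under eq_bigr do rewrite mulr_sumr.
rewrite exchange_big; apply: eq_bigr => k _ /=.
rewrite -(sum_nat_indicator (fun i => z i && (k < rank y i)%N)) mulr_sumr.
by apply: eq_bigr => i _; rewrite mulrCA -natrM mulnb.
Qed.

Lemma tR_mono phi (phi_mono : {homo phi : m k / (m <= k)%N >-> m <= k})
    z y y' (shift : forall i, if z i then y i <= y' i else y' i <= y i) :
  tR phi z y <= tR phi z y'.
Proof.
rewrite !tR_decomp lerD2l; apply: ler_sum => k _; apply: ler_wpM2l.
  by rewrite subr_ge0 phi_mono.
by rewrite ler_nat card_treated_rank_gt.
Qed.

Lemma rank_comp (D : {pred \bar R}) (f : \bar R -> \bar R) y :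
  (forall i, y i \in D) -> {in D &, {mono f : u v / u <= v}} ->
  rank (f \o y) =1 rank y.
Proof.
move=> Dy f_mono i; rewrite !rankE; apply: eq_card => j.
by rewrite !inE !lexi_pair /= !f_mono.
Qed.

Lemma tR_comp (D : {pred \bar R}) (f : \bar R -> \bar R) phi z y :
  (forall i, y i \in D) -> {in D &, {mono f : u v / u <= v}} ->
  tR phi z (f \o y) = tR phi z y.
Proof.
by move=> Dy f_mono; apply: eq_bigr => i _; rewrite (rank_comp Dy f_mono).
Qed.

End RankSum.

Section Fill.
Variable R : realType.
Implicit Types (g h : R) (s : seq R).
Local Open Scope order_scope.

Definition fin_between g h : {pred \bar R} :=
  [pred x | (x \is a fin_num) ==> (g%:E < x < h%:E)].

Lemma fill_homo g h : g < h ->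
  {in fin_between g h &, {homo fill g h : x y / x < y >-> x < y}}.
Proof.
move=> gh [r||] [s||]; rewrite !inE /= ?lte_fin //.
  by case/andP.
by move=> _ /andP[].
Qed.

Lemma fill_mono g h : g < h ->
  {in fin_between g h &, {mono fill g h : x y / x <= y >-> x <= y}}.
Proof. by move/fill_homo/le_mono_in. Qed.

Lemma seq_min_le s r : r \in s -> seq_min s <= r.
Proof.
case: s => [//|x s]; rewrite inE => /predU1P[->|rs]; first exact: bigmin_le_id.
exact: ge_bigmin_seq.
Qed.

Lemma seq_max_ge s r : r \in s -> r <= seq_max s.
Proof.
case: s => [//|x s]; rewrite inE => /predU1P[->|rs]; first exact: bigmax_ge_id.
exact: le_bigmax_seq.
Qed.

Lemma seq_min_le_max s : seq_min s <= seq_max s.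
Proof.
case: s => [|x s] //=.
by rewrite (le_trans (bigmin_le_id _ _ _ _)) ?bigmax_ge_id.
Qed.

Variable n : nat.
Implicit Types (y : 'I_n -> \bar R) (a b : R).

Lemma mem_real_coordsl y y' i :
  y i \is a fin_num -> fine (y i) \in real_coords y y'.
Proof.
move=> yi; rewrite mem_cat; apply/orP; left.
by apply: (map_f (fun j => fine (y j))); rewrite mem_filter yi mem_enum.
Qed.

Lemma mem_real_coordsr y y' i :
  y' i \is a fin_num -> fine (y' i) \in real_coords y y'.
Proof.
move=> yi; rewrite mem_cat; apply/orP; right.
by apply: (map_f (fun j => fine (y' j))); rewrite mem_filter yi mem_enum.
Qed.

Lemma gamma_lt_zeta y y' a b : 0 < a -> 0 < b -> gamma y y' a < zeta y y' b.
Proof.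
by rewrite /gamma /zeta; have := seq_min_le_max (real_coords y y'); lra.
Qed.

Lemma fin_between_gamma_zeta y y' a b (x : \bar R) : 0 < a -> 0 < b ->
  (x \is a fin_num -> fine x \in real_coords y y') ->
  x \in fin_between (gamma y y' a) (zeta y y' b).
Proof.
move=> a_gt0 b_gt0 x_coord; apply/implyP => x_fin.
rewrite -(fineK x_fin) !lte_fin.
have := seq_min_le (x_coord x_fin); have := seq_max_ge (x_coord x_fin).
by rewrite /gamma /zeta => ? ?; apply/andP; split; lra.
Qed.

End Fill.

Local Open Scope ereal_scope.

Theorem lemma4 (R : realType) (phi : nat -> R)
  (phi_mono : {homo phi : m k / (m <= k)%N >-> (m <= k)%R})
  (n : nat) (hn : (1 <= n)%N) (z : 'I_n -> bool) (y y' : 'I_n -> \bar R)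
  (hyy' : forall i, if z i then y i <= y' i else y' i <= y i)
  (a b : R) (ha : (0 < a)%R) (hb : (0 < b)%R) :
  let g := gamma y y' a in
  let h := zeta y y' b in
  let yt := fun i => fill g h (y i) in
  let yt' := fun i => fill g h (y' i) in
  [/\ (forall i, if z i then (yt i <= yt' i)%R else (yt' i <= yt i)%R),
      tR phi z y = tR phi z (fun i => (yt i)%:E) /\
      tR phi z y' = tR phi z (fun i => (yt' i)%:E)
    & (tR phi z y <= tR phi z y')%R].
Proof.
move=> g h yt yt'.
have gh : (g < h)%R by exact: gamma_lt_zeta.
have Dy i : y i \in fin_between g h.
  by apply: fin_between_gamma_zeta => //; apply: mem_real_coordsl.
have Dy' i : y' i \in fin_between g h.
  by apply: fin_between_gamma_zeta => //; apply: mem_real_coordsr.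
pose f x := (fill g h x)%:E.
have f_mono : {in fin_between g h &, {mono f : u v / u <= v}}.
  by move=> u v Du Dv; rewrite lee_fin fill_mono.
split.
- move=> i; rewrite /yt /yt'.
  by case: (z i) (hyy' i); rewrite fill_mono ?Dy ?Dy'.
- have -> : (fun i => (yt i)%:E) = f \o y by [].
  have -> : (fun i => (yt' i)%:E) = f \o y' by [].
  by rewrite !(tR_comp _ _ _ f_mono).
- exact: tR_mono.
Qed.
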